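(* For every predicate $P:\{0,1\}^K\to\{0,1\}$ and $x\in\{0,1\}^N$, there is a DNF formula $\psi_x$ over $\{0,1\}^{N\cdot K}$ with at most $2^K$ terms such that $P_x(z^S)=\psi_x(z^S)$ for every hyperedge $S$. Moreover, for any hyperedge $S$, at most one term of $\psi_x$ is satisfied by $z^S$. Furthermore, there exists a CNF formula $\phi_x$ over $\{0,1\}^{N\cdot K}$ with at most $2^K$ clauses such that $\phi_x(z^S)=\psi_x(z^S)$ for every hyperedge $S$.
   Context: A hyperedge is an ordered tuple $S=(i_1,\dots,i_K)$ of $K$ distinct elements of $[N]$; $x_S=(x_{i_1},\dots,x_{i_K})$. Its encoding $z^S\in\{0,1\}^{N\cdot K}$ is the concatenation of $K$ vectors in $\{0,1\}^N$, where the $j$-th vector has $0$ in component $i_j$ and $1$ elsewhere. For $z\in\{0,1\}^{N\cdot K}$, $z_{j,l}=z_{(j-1)N+l}$. $P_x:\{0,1\}^{N\cdot K}\to\{0,1\}$ is any function satisfying $P_x(z^S)=P(x_S)$ for every hyperedge $S$. *)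

From mathcomp Require Import all_boot.
Set Implicit Arguments. Unset Strict Implicit. Unset Printing Implicit Defensive.

(* A literal (v, b) is satisfied by z iff z v = b
   (b = true: positive literal z_v, b = false: negated literal ~z_v). *)
Definition literal (n : nat) := ('I_n * bool)%type.
Definition lit_eval n (z : 'I_n -> bool) (l : literal n) : bool := z l.1 == l.2.

Definition term_eval n (z : 'I_n -> bool) (t : seq (literal n)) : bool :=
  all (lit_eval z) t.
Definition clause_eval n (z : 'I_n -> bool) (c : seq (literal n)) : bool :=
  has (lit_eval z) c.

Definition dnf (n : nat) := seq (seq (literal n)).
Definition cnf (n : nat) := seq (seq (literal n)).
Definition dnf_eval n (z : 'I_n -> bool) (f : dnf n) : bool := has (term_eval z) f.
Definition cnf_eval n (z : 'I_n -> bool) (f : cnf n) : bool := all (clause_eval z) f.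

(* A hyperedge: an ordered K-tuple of distinct elements of [N]. *)
Definition hyperedge (N K : nat) (S : 'I_K -> 'I_N) : Prop := injective S.

(* Encoding z^S in {0,1}^(N*K): with 0-based indices, coordinate j*N + l
   (block j < K, position l < N) is 0 iff l = S j, and 1 otherwise. *)
Definition zS (N K : nat) (S : 'I_K -> 'I_N) : 'I_(N * K) -> bool :=
  fun i => ~~ [exists j : 'I_K, nat_of_ord i == j * N + S j].

Definition restr (N K : nat) (x : 'I_N -> bool) (S : 'I_K -> 'I_N) : {ffun 'I_K -> bool} :=
  [ffun j => x (S j)].

From mathcomp Require Import all_boot.

Set Implicit Arguments.
Unset Strict Implicit.
Unset Printing Implicit Defensive.

(* For each assignment a of the K hyperedge values, let T_a be the conjunction
   of the variables z_{j,l} with x_l <> a_j.  On z^S the only zero of block j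
   sits at position S j, so T_a(z^S) holds iff x_{S j} = a_j for every j, i.e.
   iff x_S = a.  Hence the disjunction of the T_a with P a is a DNF for P_x in
   which at most one term fires, and the conjunction of the negations of the
   T_a with ~ P a is an equivalent CNF.  Each block is read separately. *)

Lemma term_eval_pos n (z : 'I_n -> bool) (s : seq 'I_n) :
  term_eval z [seq (i, true) | i <- s] = all z s.
Proof.
by rewrite /term_eval all_map; apply: eq_all => i; rewrite /lit_eval /= eqb_id.
Qed.

Lemma clause_eval_neg n (z : 'I_n -> bool) (s : seq 'I_n) :
  clause_eval z [seq (i, false) | i <- s] = ~~ all z s.
Proof.
rewrite /clause_eval has_map -[has _ _]negbK -all_predC.
by congr negb; apply: eq_all => i; rewrite /= /lit_eval /= eqbF_neg negbK.
Qed.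

Section CanonicalForms.
Variables (n : nat) (A : finType) (term clause : A -> seq (literal n)).

Definition minterm_dnf (P : pred A) : dnf n := [seq term a | a <- enum A & P a].
Definition maxterm_cnf (P : pred A) : cnf n := [seq clause a | a <- enum A & ~~ P a].

Lemma size_minterm_dnf P : size (minterm_dnf P) <= #|A|.
Proof. by rewrite size_map size_filter cardE count_size. Qed.

Lemma size_maxterm_cnf P : size (maxterm_cnf P) <= #|A|.
Proof. by rewrite size_map size_filter cardE count_size. Qed.

Variables (z : 'I_n -> bool) (c : A).
Hypothesis term_evalE : forall a, term_eval z (term a) = (c == a).
Hypothesis clause_evalE : forall a, clause_eval z (clause a) = (c != a).

Lemma minterm_dnfE P : dnf_eval z (minterm_dnf P) = P c.
Proof.
rewrite /dnf_eval has_map; apply/hasP/idP => [[a] | Pc].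
  by rewrite mem_filter /preim /= term_evalE => /andP[Pa _] /eqP->.
exists c; first by rewrite mem_filter Pc mem_enum.
by rewrite /preim /= term_evalE.
Qed.

Lemma count_minterm_dnf P : count (term_eval z) (minterm_dnf P) <= 1.
Proof.
have <- : count_mem c (enum A) = 1 by rewrite count_uniq_mem ?enum_uniq ?mem_enum.
rewrite count_map count_filter; apply: sub_count => a /andP[+ _].
by rewrite /preim /= term_evalE eq_sym.
Qed.

Lemma maxterm_cnfE P : cnf_eval z (maxterm_cnf P) = P c.
Proof.
rewrite /cnf_eval all_map all_filter; apply/allP/idP => [all_cl | Pc a _].
  apply: contraT => nPc; have := all_cl c (mem_enum A c).
  by rewrite /= nPc clause_evalE eqxx.
by rewrite /= clause_evalE; apply/implyP; apply: contra => /eqP <-.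
Qed.

End CanonicalForms.

Lemma eqn_blockD (N j j' l l' : nat) : l < N -> l' < N ->
  (j * N + l == j' * N + l') = (j == j') && (l == l').
Proof.
move=> ltlN ltl'N; have N_gt0 : 0 < N by apply: leq_ltn_trans ltlN.
apply/eqP/andP => [E | [/eqP-> /eqP->]] //; split.
  by have := congr1 (divn^~ N) E; rewrite !divnMDl // !divn_small ?addn0 // => ->.
by have := congr1 (modn^~ N) E; rewrite !modnMDl !modn_small // => ->.
Qed.

Section BlockEncoding.
Variables (N K : nat).

Lemma block_var_subproof (j : 'I_K) (l : 'I_N) : j * N + l < N * K.
Proof.
have lt_next : j * N + l < j.+1 * N by rewrite mulSnr ltn_add2l.
by apply: leq_trans lt_next _; rewrite mulnC leq_mul2l ltn_ord orbT.
Qed.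

Definition block_var (j : 'I_K) (l : 'I_N) : 'I_(N * K) :=
  Ordinal (block_var_subproof j l).

Lemma zS_block_var (S : 'I_K -> 'I_N) j l : zS S (block_var j l) = (l != S j).
Proof.
rewrite /zS; congr negb; apply/existsP/eqP => [[j'] | ->]; last by exists j.
by rewrite /= eqn_blockD // => /andP[/eqP/val_inj-> /eqP/val_inj->].
Qed.

Variable x : 'I_N -> bool.

Definition mismatch_vars (a : {ffun 'I_K -> bool}) : seq 'I_(N * K) :=
  [seq block_var j l | j <- enum 'I_K, l <- [seq l <- enum 'I_N | x l != a j]].

Lemma all_zS_mismatch_vars S a : all (zS S) (mismatch_vars a) = (restr x S == a).
Proof.
apply/all_allpairsP/eqP => [zS_mis | <- j l _]; last first.
  by rewrite mem_filter zS_block_var ffunE => /andP[+ _]; apply: contraNneq => ->.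
apply/ffunP => j; rewrite ffunE; apply/eqP/negPn/negP => ne.
have := zS_mis j (S j); rewrite zS_block_var mem_enum mem_filter mem_enum ne eqxx.
by move/(_ isT isT).
Qed.

Definition minterm a := [seq (i, true) | i <- mismatch_vars a].
Definition maxterm a := [seq (i, false) | i <- mismatch_vars a].

Lemma term_eval_minterm S a : term_eval (zS S) (minterm a) = (restr x S == a).
Proof. by rewrite term_eval_pos all_zS_mismatch_vars. Qed.

Lemma clause_eval_maxterm S a : clause_eval (zS S) (maxterm a) = (restr x S != a).
Proof. by rewrite clause_eval_neg all_zS_mismatch_vars. Qed.

End BlockEncoding.

Theorem lemma8p4 (N K : nat) (P : {ffun 'I_K -> bool} -> bool) (x : 'I_N -> bool) :
  exists psi : dnf (N * K),
    size psi <= 2 ^ K /\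
    (forall S : 'I_K -> 'I_N, hyperedge S -> dnf_eval (zS S) psi = P (restr x S)) /\
    (forall S : 'I_K -> 'I_N, hyperedge S -> count (term_eval (zS S)) psi <= 1) /\
    (exists phi : cnf (N * K),
       size phi <= 2 ^ K /\
       (forall S : 'I_K -> 'I_N, hyperedge S -> cnf_eval (zS S) phi = dnf_eval (zS S) psi)).
Proof.
have card_assignments : #|{ffun 'I_K -> bool}| = 2 ^ K.
  by rewrite card_ffun card_bool card_ord.
exists (minterm_dnf (minterm x) P).
split; first by rewrite -card_assignments size_minterm_dnf.
split; first by move=> S _; exact: minterm_dnfE (term_eval_minterm x S) P.
split; first by move=> S _; exact: count_minterm_dnf (term_eval_minterm x S) P.
exists (maxterm_cnf (maxterm x) P).
split; first by rewrite -card_assignments size_maxterm_cnf.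
move=> S _; rewrite (minterm_dnfE (term_eval_minterm x S)).
exact: maxterm_cnfE (clause_eval_maxterm x S) P.
Qed.
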